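(* Let $(\Gamma,M)$ be a three-node E-GCM graph in which every pair of distinct nodes is adjacent (a triangle) and every adjacency is odd, i.e. $m_{ij}$ is odd for all $i\ne j$. Then $(\Gamma,M)$ is not admissible.
   Context: E-GCM $M=(M_{ij})_{i,j\in I_n}$: real, $M_{ii}=2$, $M_{ij}\le0$ ($i\ne j$), $M_{ij}\ne0\iff M_{ji}\ne0$, nonzero $M_{ij}M_{ji}$ either $\ge4$ or $=4\cos^2(\pi/m)$ with $m\ge3$ integer; nodes $\gamma_i$ adjacent iff $M_{ij}\ne 0$. For $i\ne j$, $m_{ij}=k$ if $M_{ij}M_{ji}=4\cos^2(\pi/k)$ for an integer $k\ge2$, and $m_{ij}=\infty$ if $M_{ij}M_{ji}\ge4$. Positions $\lambda\in\mathbb{R}^n$; firing $\gamma_i$ (allowed iff $\lambda_i>0$) replaces $\lambda_j$ by $\lambda_j-M_{ij}\lambda_i$. Numbers game: fire nodes with positive population while any exist; a game sequence is convergent if finite. A connected E-GCM graph is admissible if some nonzero position with all $\lambda_i\ge 0$ has a convergent game sequence. *)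

From Stdlib Require Import Reals Lra List Arith.
Open Scope R_scope.

(* An E-GCM on n nodes: M i j for i, j < n (values outside are irrelevant). *)
Definition EGCM (n : nat) (M : nat -> nat -> R) : Prop :=
  (forall i, (i < n)%nat -> M i i = 2) /\
  (forall i j, (i < n)%nat -> (j < n)%nat -> i <> j -> M i j <= 0) /\
  (forall i j, (i < n)%nat -> (j < n)%nat -> (M i j <> 0 <-> M j i <> 0)) /\
  (forall i j, (i < n)%nat -> (j < n)%nat -> i <> j -> M i j <> 0 ->
     M i j * M j i >= 4 \/
     exists m : nat, (3 <= m)%nat /\ M i j * M j i = 4 * (cos (PI / INR m))^2).

Definition adjacent (M : nat -> nat -> R) (i j : nat) : Prop := M i j <> 0.

(* m_ij = k (k >= 2 an integer) iff M_ij M_ji = 4 cos^2(pi/k) *)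
Definition m_eq (M : nat -> nat -> R) (i j k : nat) : Prop :=
  (2 <= k)%nat /\ M i j * M j i = 4 * (cos (PI / INR k))^2.

Definition m_odd (M : nat -> nat -> R) (i j : nat) : Prop :=
  exists k : nat, m_eq M i j k /\ Nat.Odd k.

Definition fire (M : nat -> nat -> R) (i : nat) (lam : nat -> R) : nat -> R :=
  fun j => lam j - M i j * lam i.

Fixpoint legal_play (n : nat) (M : nat -> nat -> R) (lam : nat -> R)
         (s : list nat) : Prop :=
  match s with
  | nil => True
  | i :: s' => (i < n)%nat /\ 0 < lam i /\ legal_play n M (fire M i lam) s'
  end.

Fixpoint play (M : nat -> nat -> R) (lam : nat -> R) (s : list nat) : nat -> R :=
  match s with
  | nil => lam
  | i :: s' => play M (fire M i lam) s'
  end.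

Definition convergent_game (n : nat) (M : nat -> nat -> R) (lam : nat -> R)
  (s : list nat) : Prop :=
  legal_play n M lam s /\ (forall j, (j < n)%nat -> play M lam s j <= 0).

Definition admissible (n : nat) (M : nat -> nat -> R) : Prop :=
  exists lam : nat -> R,
    (forall i, (i < n)%nat -> 0 <= lam i) /\
    (exists i, (i < n)%nat /\ lam i <> 0) /\
    exists s, convergent_game n M lam s.

(* A positive weight vector c with sum_j c_j M_ij <= 0 for every row i makes the
   weighted total sum_j c_j lam_j nondecreasing along every legal play, since
   firing i changes it by -lam_i sum_j c_j M_ij.  A nonzero nonnegative start
   has positive total while a terminal position has nonpositive total, so such
   a c rules out admissibility.  For an odd triangle, a_ij := -M_ij > 0 and
   a_ij a_ji = 4 cos^2(pi/m_ij) >= 1; the cube roots c_i of a_ij a_ik then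
   satisfy c_i^2 <= a_ij a_ik c_j c_k (because c_0 c_1 c_2 >= 1), and AM-GM
   gives 2 c_i <= a_ij c_j + a_ik c_k, i.e. the required row inequalities. *)
From Stdlib Require Import Reals Lra Lia.
Open Scope R_scope.

Fixpoint weighted_sum (n : nat) (c lam : nat -> R) : R :=
  match n with
  | O => 0
  | S n' => weighted_sum n' c lam + c n' * lam n'
  end.

Lemma weighted_sum_fire n M i c lam :
  weighted_sum n c (fire M i lam) = weighted_sum n c lam - lam i * weighted_sum n c (M i).
Proof.
  induction n as [|n IH]; simpl; [ring|].
  rewrite IH; unfold fire; ring.
Qed.

Lemma weighted_sum_nonpos n c lam :
  (forall j, (j < n)%nat -> 0 <= c j) -> (forall j, (j < n)%nat -> lam j <= 0) ->
  weighted_sum n c lam <= 0.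
Proof.
  induction n as [|n IH]; intros Hc Hlam; simpl; [lra|].
  assert (weighted_sum n c lam <= 0) by (apply IH; intros; auto).
  assert (0 <= c n) by auto. assert (lam n <= 0) by auto.
  nra.
Qed.

Lemma weighted_sum_nonneg n c lam :
  (forall j, (j < n)%nat -> 0 <= c j) -> (forall j, (j < n)%nat -> 0 <= lam j) ->
  0 <= weighted_sum n c lam.
Proof.
  induction n as [|n IH]; intros Hc Hlam; simpl; [lra|].
  assert (0 <= weighted_sum n c lam) by (apply IH; intros; auto).
  assert (0 <= c n) by auto. assert (0 <= lam n) by auto.
  nra.
Qed.

Lemma weighted_sum_pos n c lam :
  (forall j, (j < n)%nat -> 0 < c j) -> (forall j, (j < n)%nat -> 0 <= lam j) ->
  (exists j, (j < n)%nat /\ lam j <> 0) -> 0 < weighted_sum n c lam.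
Proof.
  induction n as [|n IH]; intros Hc Hlam [j [Hj Hlamj]]; [lia|simpl].
  assert (0 < c n) by auto. assert (0 <= lam n) by auto.
  destruct (Nat.eq_dec j n) as [->|Hjn].
  - assert (0 <= weighted_sum n c lam).
    { apply weighted_sum_nonneg; intros i Hi; [left|]; auto. }
    assert (0 < lam n) by lra.
    nra.
  - assert (0 < weighted_sum n c lam).
    { apply IH; [intros; auto | intros; auto | exists j; split; [lia | exact Hlamj]]. }
    nra.
Qed.

Definition nonpositive_weight (n : nat) (M : nat -> nat -> R) (c : nat -> R) : Prop :=
  (forall j, (j < n)%nat -> 0 < c j) /\
  (forall i, (i < n)%nat -> weighted_sum n c (M i) <= 0).

Lemma weighted_sum_play_mono n M c lam s :
  nonpositive_weight n M c -> legal_play n M lam s ->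
  weighted_sum n c lam <= weighted_sum n c (play M lam s).
Proof.
  intros [_ Hrows]. revert lam.
  induction s as [|i s IH]; intros lam Hplay; simpl; [lra|].
  destruct Hplay as [Hi [Hlami Hplay]].
  specialize (IH _ Hplay). rewrite weighted_sum_fire in IH.
  specialize (Hrows i Hi). nra.
Qed.

Lemma not_admissible_of_nonpositive_weight n M c :
  nonpositive_weight n M c -> ~ admissible n M.
Proof.
  intros Hw [lam [Hnneg [Hnz [s [Hplay Hend]]]]].
  pose proof (weighted_sum_play_mono n M c lam s Hw Hplay) as Hmono.
  destruct Hw as [Hc _].
  assert (0 < weighted_sum n c lam) by (apply weighted_sum_pos; auto).
  assert (weighted_sum n c (play M lam s) <= 0).
  { apply weighted_sum_nonpos; auto. intros j Hj; left; auto. }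
  lra.
Qed.

Lemma m_odd_mul_ge1 M i j : m_odd M i j -> 1 <= M i j * M j i.
Proof.
  intros [k [[Hk Heq] [q Hq]]]. rewrite Heq.
  assert (H3 : 3 <= INR k) by (replace 3 with (INR 3) by (simpl; lra); apply le_INR; lia).
  pose proof PI_RGT_0.
  assert (Hk_pos : 0 <= PI / INR k).
  { unfold Rdiv; apply Rmult_le_pos; [lra|]. left; apply Rinv_0_lt_compat; lra. }
  assert (Hk_le : PI / INR k <= PI / 3).
  { unfold Rdiv; apply Rmult_le_compat_l; [lra|]. apply Rinv_le_contravar; lra. }
  assert (Hcos : cos (PI / 3) <= cos (PI / INR k)) by (apply cos_decr_1; lra).
  rewrite cos_PI3 in Hcos. nra.
Qed.

Lemma cube_root_exists q : 0 < q -> exists c, 0 < c /\ c ^ 3 = q.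
Proof.
  intro Hq. exists (Rpower q (/ 3)). split; [apply exp_pos|].
  replace 3%nat with (Z.to_nat 3) by reflexivity.
  rewrite <- Rpower_pow by apply exp_pos.
  rewrite Rpower_mult. replace (/ 3 * INR (Z.to_nat 3)) with 1 by (simpl; field).
  apply Rpower_1; exact Hq.
Qed.

Lemma two_mul_le_add_of_sqr_le_mul c u w :
  0 < u -> 0 < w -> c * c <= u * w -> 2 * c <= u + w.
Proof.
  intros Hu Hw H. pose proof (pow2_ge_0 (u - w)).
  destruct (Rle_or_lt (2 * c) (u + w)) as [Hle|Hlt]; [exact Hle|].
  assert (0 < (2 * c - (u + w)) * (2 * c + (u + w))) by (apply Rmult_lt_0_compat; lra).
  nra.
Qed.

Lemma triangle_weights a01 a02 a10 a12 a20 a21 :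
  0 < a01 -> 0 < a02 -> 0 < a10 -> 0 < a12 -> 0 < a20 -> 0 < a21 ->
  1 <= a01 * a10 -> 1 <= a02 * a20 -> 1 <= a12 * a21 ->
  exists c0 c1 c2, 0 < c0 /\ 0 < c1 /\ 0 < c2 /\
    2 * c0 <= a01 * c1 + a02 * c2 /\
    2 * c1 <= a10 * c0 + a12 * c2 /\
    2 * c2 <= a20 * c0 + a21 * c1.
Proof.
  intros H01 H02 H10 H12 H20 H21 P01 P02 P12.
  assert (Hprod : 1 <= (a01 * a02) * (a10 * a12) * (a20 * a21)).
  { replace ((a01 * a02) * (a10 * a12) * (a20 * a21))
      with ((a01 * a10) * (a02 * a20) * (a12 * a21)) by ring.
    assert (Hge1 : forall x y, 1 <= x -> 1 <= y -> 1 <= x * y) by (intros; nra).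
    auto. }
  destruct (cube_root_exists (a01 * a02)) as [c0 [Hc0 E0]]; [nra|].
  destruct (cube_root_exists (a10 * a12)) as [c1 [Hc1 E1]]; [nra|].
  destruct (cube_root_exists (a20 * a21)) as [c2 [Hc2 E2]]; [nra|].
  assert (Hc : 1 <= c0 * c1 * c2).
  { assert (Hcube : 1 <= (c0 * c1 * c2) ^ 3).
    { replace ((c0 * c1 * c2) ^ 3) with (c0 ^ 3 * c1 ^ 3 * c2 ^ 3) by ring.
      rewrite E0, E1, E2; exact Hprod. }
    destruct (Rle_or_lt 1 (c0 * c1 * c2)) as [Hle|Hlt]; [exact Hle|].
    assert (0 < c0 * c1 * c2) by (apply Rmult_lt_0_compat; [apply Rmult_lt_0_compat|]; lra).
    assert (Hlt1 : 0 <= (c0 * c1 * c2) ^ 3 < 1) by (apply pow_lt_1_compat; [lra|lia]).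
    lra. }
  assert (Hsq : forall ci p, 0 < ci -> 1 <= ci * p -> ci * ci <= ci ^ 3 * p).
  { intros ci p Hci H. replace (ci ^ 3 * p) with (ci * ci * (ci * p)) by ring.
    assert (0 < ci * ci) by nra. nra. }
  exists c0, c1, c2. repeat split; try assumption; apply two_mul_le_add_of_sqr_le_mul;
    try (apply Rmult_lt_0_compat; assumption).
  - replace (a01 * c1 * (a02 * c2)) with (c0 ^ 3 * (c1 * c2)) by (rewrite E0; ring).
    apply Hsq; [exact Hc0|]. rewrite <- Rmult_assoc; exact Hc.
  - replace (a10 * c0 * (a12 * c2)) with (c1 ^ 3 * (c0 * c2)) by (rewrite E1; ring).
    apply Hsq; [exact Hc1|]. replace (c1 * (c0 * c2)) with (c0 * c1 * c2) by ring; exact Hc.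
  - replace (a20 * c0 * (a21 * c1)) with (c2 ^ 3 * (c0 * c1)) by (rewrite E2; ring).
    apply Hsq; [exact Hc2|]. replace (c2 * (c0 * c1)) with (c0 * c1 * c2) by ring; exact Hc.
Qed.

Lemma triangle_nonpositive_weight M :
  (forall i, (i < 3)%nat -> M i i = 2) ->
  (forall i j, (i < 3)%nat -> (j < 3)%nat -> i <> j -> M i j < 0) ->
  (forall i j, (i < 3)%nat -> (j < 3)%nat -> i <> j -> 1 <= M i j * M j i) ->
  exists c, nonpositive_weight 3 M c.
Proof.
  intros Hdiag Hneg Hpair.
  assert (H01 : M 0%nat 1%nat < 0) by (apply Hneg; lia).
  assert (H02 : M 0%nat 2%nat < 0) by (apply Hneg; lia).
  assert (H10 : M 1%nat 0%nat < 0) by (apply Hneg; lia).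
  assert (H12 : M 1%nat 2%nat < 0) by (apply Hneg; lia).
  assert (H20 : M 2%nat 0%nat < 0) by (apply Hneg; lia).
  assert (H21 : M 2%nat 1%nat < 0) by (apply Hneg; lia).
  assert (P01 : 1 <= M 0%nat 1%nat * M 1%nat 0%nat) by (apply Hpair; lia).
  assert (P02 : 1 <= M 0%nat 2%nat * M 2%nat 0%nat) by (apply Hpair; lia).
  assert (P12 : 1 <= M 1%nat 2%nat * M 2%nat 1%nat) by (apply Hpair; lia).
  destruct (triangle_weights (- M 0%nat 1%nat) (- M 0%nat 2%nat) (- M 1%nat 0%nat)
                             (- M 1%nat 2%nat) (- M 2%nat 0%nat) (- M 2%nat 1%nat))
    as (c0 & c1 & c2 & Hc0 & Hc1 & Hc2 & Hrow0 & Hrow1 & Hrow2); try nra.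
  exists (fun j => match j with 0 => c0 | 1 => c1 | _ => c2 end)%nat. split.
  - intros j Hj. destruct j as [|[|[|j]]]; [assumption..|lia].
  - intros i Hi. simpl.
    destruct i as [|[|[|i]]]; [| | |lia]; rewrite Hdiag by lia; lra.
Qed.

Theorem lemma4p15 (M : nat -> nat -> R) :
  EGCM 3 M ->
  (forall i j, (i < 3)%nat -> (j < 3)%nat -> i <> j -> adjacent M i j) ->
  (forall i j, (i < 3)%nat -> (j < 3)%nat -> i <> j -> m_odd M i j) ->
  ~ admissible 3 M.
Proof.
  intros [Hdiag [Hoff _]] Hadj Hodd.
  destruct (triangle_nonpositive_weight M) as [c Hc].
  - exact Hdiag.
  - intros i j Hi Hj Hij.
    pose proof (Hoff i j Hi Hj Hij). pose proof (Hadj i j Hi Hj Hij).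
    unfold adjacent in *. lra.
  - intros i j Hi Hj Hij. apply m_odd_mul_ge1, Hodd; assumption.
  - exact (not_admissible_of_nonpositive_weight 3 M c Hc).
Qed.
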